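(* Let $k\ge1$, let $(\Lambda,d)$ be a $k$-graph, and let $p,q\in\mathbb{N}^k$. Then $q(p\Lambda)=(q+p)\Lambda$; that is, the dual of the $k$-graph $(p\Lambda,d_p)$ with respect to $q$ and the dual of $\Lambda$ with respect to $q+p$ have the same paths, the same range and source maps, the same composition, and the same degree map.
   Context: A $k$-graph is a pair $(\Lambda,d)$ where $\Lambda$ is a countable category and $d:\Lambda\to\mathbb{N}^k$ is a functor satisfying the factorisation property: if $\lambda$ is a morphism with $d(\lambda)=m+n$, then there are unique morphisms $\mu\in d^{-1}(m)$, $\nu\in d^{-1}(n)$ with $\lambda=\mu\nu$. Morphisms are called paths; vertices are identified with paths of degree $0$; $\Lambda^n:=d^{-1}(n)$. For $\lambda$ with $d(\lambda)=n$ and $l\le m\le n$, $\lambda(l,m)$ denotes the unique path of degree $m-l$ with $\lambda=\lambda(0,l)\lambda(l,m)\lambda(m,n)$. For $p\in\mathbb{N}^k$, the dual $k$-graph $p\Lambda$ has paths $\{\lambda\in\Lambda:d(\lambda)\ge p\}$, vertices $\Lambda^p$, range $r_p(\lambda)=\lambda(0,p)$, source $s_p(\lambda)=\lambda(d(\lambda)-p,d(\lambda))$, composition $\lambda\circ_p\mu=\lambda\,\mu(p,d(\mu))$ when $s_p(\lambda)=r_p(\mu)$, and degree $d_p(\lambda)=d(\lambda)-p$; $(p\Lambda,d_p)$ is again a $k$-graph, so its dual $q(p\Lambda)$ is defined by the same recipe. *)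

From mathcomp Require Import all_boot.
Set Implicit Arguments. Unset Strict Implicit. Unset Printing Implicit Defensive.

Definition degk (k : nat) := {ffun 'I_k -> nat}.
Definition dzero k : degk k := [ffun => 0].
Definition dadd k (m n : degk k) : degk k := [ffun i => m i + n i].
Definition dsub k (m n : degk k) : degk k := [ffun i => m i - n i].
Definition dle k (m n : degk k) : Prop := forall i, m i <= n i.

(* A k-graph presented "arrows only" on a carrier type T: the morphisms
   (paths) are the elements satisfying [kpath]; objects are identified with
   identity morphisms; [krange]/[ksource] give the identity morphisms at the
   range/source; [kcomp] is composition (meaningful when composable);
   [kdeg] is the degree functor d; [kseg l m lam] is lam(l,m), a chosen
   witness of the factorisation property (uniquely determined by it). *)
Record kgraph_data (k : nat) (T : Type) := KGraphData {
  kpath : T -> Prop;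
  krange : T -> T;
  ksource : T -> T;
  kcomp : T -> T -> T;
  kdeg : T -> degk k;
  kseg : T -> degk k -> degk k -> T }.

Section KGraph.
Variables (k : nat) (T : Type) (G : kgraph_data k T).
Local Notation P := (kpath G).
Local Notation r := (krange G).
Local Notation s := (ksource G).
Local Notation comp := (kcomp G).
Local Notation d := (kdeg G).
Local Notation seg := (kseg G).

Definition is_kgraph : Prop :=
  (forall f, P f -> P (r f) /\ P (s f)) /\
  (forall f, P f -> r (r f) = r f /\ s (r f) = r f /\
                    r (s f) = s f /\ s (s f) = s f) /\
  (forall f g, P f -> P g -> s f = r g ->
     P (comp f g) /\ r (comp f g) = r f /\ s (comp f g) = s g) /\
  (forall f, P f -> comp (r f) f = f /\ comp f (s f) = f) /\
  (forall f g h, P f -> P g -> P h -> s f = r g -> s g = r h ->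
     comp (comp f g) h = comp f (comp g h)) /\
  (forall f, P f -> d (r f) = dzero k) /\
  (forall f g, P f -> P g -> s f = r g -> d (comp f g) = dadd (d f) (d g)) /\
  (forall f m n, P f -> d f = dadd m n ->
     exists mu nu, [/\ P mu, P nu, d mu = m, d nu = n
                     & s mu = r nu /\ f = comp mu nu]) /\
  (forall f m n mu nu mu' nu', P f -> P mu -> P nu -> P mu' -> P nu' ->
     d mu = m -> d nu = n -> s mu = r nu -> f = comp mu nu ->
     d mu' = m -> d nu' = n -> s mu' = r nu' -> f = comp mu' nu' ->
     mu = mu' /\ nu = nu') /\
  (forall f l m, P f -> dle l m -> dle m (d f) ->
     [/\ P (seg f (dzero k) l), P (seg f l m) & P (seg f m (d f))] /\
     [/\ d (seg f (dzero k) l) = l, d (seg f l m) = dsub m l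
        & d (seg f m (d f)) = dsub (d f) m] /\
     [/\ s (seg f (dzero k) l) = r (seg f l m),
         s (seg f l m) = r (seg f m (d f))
       & f = comp (comp (seg f (dzero k) l) (seg f l m)) (seg f m (d f))]).
End KGraph.

Definition kdual (k : nat) (T : Type) (p : degk k) (G : kgraph_data k T)
  : kgraph_data k T :=
  {| kpath := fun f => kpath G f /\ dle p (kdeg G f);
     krange := fun f => kseg G f (dzero k) p;
     ksource := fun f => kseg G f (dsub (kdeg G f) p) (kdeg G f);
     kcomp := fun f g => kcomp G f (kseg G g p (kdeg G g));
     kdeg := fun f => dsub (kdeg G f) p;
     kseg := fun f l m => kseg G f l (dadd m p) |}.

From mathcomp Require Import all_boot zify.
Set Implicit Arguments. Unset Strict Implicit.

(* Unfolding the two dual constructions, ranges agree definitionally and the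
   degrees, sources and paths agree by arithmetic in N^k.  The one genuine
   identity is in the composition: the tail of degree p of the tail
   [lam(q, d lam)] is the tail [lam(q + p, d lam)].  Both give a factorisation
   of [lam] whose first factor has degree [q + p], so they coincide by
   uniqueness of factorisations. *)

Lemma daddC k (m n : degk k) : dadd m n = dadd n m.
Proof. by apply/ffunP => i; rewrite !ffunE addnC. Qed.

Lemma dsub_dsub k (m p q : degk k) : dsub (dsub m p) q = dsub m (dadd q p).
Proof. by apply/ffunP => i; rewrite !ffunE addnC subnDA. Qed.

Lemma dsubK k (m p : degk k) : dle p m -> dadd (dsub m p) p = m.
Proof. by move=> le_pm; apply/ffunP => i; rewrite !ffunE subnK. Qed.

Lemma dle_dadd k (m p q : degk k) :
  dle p m /\ dle q (dsub m p) <-> dle (dadd q p) m.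
Proof.
split=> [[le_pm le_qm] i | le_qpm]; first by move: (le_pm i) (le_qm i); rewrite !ffunE; lia.
by split=> i; move: (le_qpm i); rewrite !ffunE; lia.
Qed.

Section Tails.
Variables (k : nat) (T : Type) (G : kgraph_data k T).
Hypothesis HG : is_kgraph G.
Local Notation P := (kpath G).
Local Notation r := (krange G).
Local Notation s := (ksource G).
Local Notation comp := (kcomp G).
Local Notation d := (kdeg G).
Local Notation seg := (kseg G).

Definition ktail f l := seg f l (d f).

Lemma kcomp_path f g : P f -> P g -> s f = r g ->
  P (comp f g) /\ r (comp f g) = r f /\ s (comp f g) = s g.
Proof. by have [_ [_ [comp_path _]]] := HG; apply: comp_path. Qed.

Lemma kcompA f g h : P f -> P g -> P h -> s f = r g -> s g = r h ->
  comp (comp f g) h = comp f (comp g h).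
Proof. by have [_ [_ [_ [_ [compA _]]]]] := HG; apply: compA. Qed.

Lemma kdeg_comp f g : P f -> P g -> s f = r g -> d (comp f g) = dadd (d f) (d g).
Proof. by have [_ [_ [_ [_ [_ [_ [deg_comp _]]]]]]] := HG; apply: deg_comp. Qed.

Lemma factorisation_unique f mu nu mu' nu' :
  P f -> P mu -> P nu -> P mu' -> P nu' ->
  d mu = d mu' -> d nu = d nu' -> s mu = r nu -> s mu' = r nu' ->
  f = comp mu nu -> f = comp mu' nu' -> mu = mu' /\ nu = nu'.
Proof.
have [_ [_ [_ [_ [_ [_ [_ [_ [uniq _]]]]]]]]] := HG.
by move=> *; apply: (uniq f (d mu) (d nu) mu nu mu' nu').
Qed.

Lemma ktail_factor f l : P f -> dle l (d f) ->
  [/\ P (ktail f l), d (ktail f l) = dsub (d f) l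
    & exists2 a, [/\ P a, d a = l & s a = r (ktail f l)] & f = comp a (ktail f l)].
Proof.
have [_ [_ [_ [_ [_ [_ [_ [_ [_ seg_spec]]]]]]]]] := HG.
move=> Pf le_lf; have [[Pa Pb Ptail] [[da db dtail] [sab sb Ef]]] :=
  seg_spec f l l Pf (fun i => leqnn _) le_lf.
have [Pab [_ sab']] := kcomp_path Pa Pb sab.
split=> //; exists (comp (seg f (dzero k) l) (seg f l l)) => //; split=> //.
- by rewrite kdeg_comp // da db; apply/ffunP => i; rewrite !ffunE subnn addn0.
- by rewrite sab'.
Qed.

Lemma ktail_ktail g q p : P g -> dle (dadd q p) (d g) ->
  ktail (ktail g q) p = ktail g (dadd q p).
Proof.
move=> Pg le_qpg.
have [le_qg le_pgq] : dle q (d g) /\ dle p (dsub (d g) q) by apply/dle_dadd; rewrite daddC.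
have [Ph dh [a [Pa da sa] Eg]] := ktail_factor Pg le_qg.
set h := ktail g q in Ph dh sa Eg.
have le_ph : dle p (d h) by rewrite dh.
have [Ph' dh' [b [Pb db sb] Eh]] := ktail_factor Ph le_ph.
have [Pe de [c [Pc dc sc] Eg']] := ktail_factor Pg le_qpg.
have [_ [rbh' _]] := kcomp_path Pb Ph' sb.
have sab : s a = r b by rewrite sa Eh rbh'.
have [Pab [_ sab']] := kcomp_path Pa Pb sab.
have Eg2 : g = comp (comp a b) (ktail h p) by rewrite kcompA // -Eh.
have dab : d (comp a b) = d c by rewrite kdeg_comp // da db dc.
have dtails : d (ktail h p) = d (ktail g (dadd q p)).
  by rewrite dh' dh de dsub_dsub daddC.
by have [] := factorisation_unique Pg Pab Ph' Pc Pe dab dtails (etrans sab' sb) sc Eg2 Eg'.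
Qed.

End Tails.

Theorem proposition3p4 (k : nat) (T : countType) (G : kgraph_data k T)
    (p q : degk k) :
  0 < k -> is_kgraph G ->
  let G1 := kdual q (kdual p G) in
  let G2 := kdual (dadd q p) G in
  (forall f, kpath G1 f <-> kpath G2 f) /\
  (forall f, kpath G1 f ->
     [/\ krange G1 f = krange G2 f,
         ksource G1 f = ksource G2 f,
         kdeg G1 f = kdeg G2 f
       & forall g, kpath G1 g -> ksource G1 f = krange G1 g ->
           kcomp G1 f g = kcomp G2 f g]).
Proof.
move=> _ HG G1 G2; rewrite /G1 /G2 /=.
split=> [f | f [[_ le_pf] _]].
  by have := dle_dadd (kdeg G f) p q; tauto.
split=> //.
- by rewrite dsub_dsub dsubK.
- exact: dsub_dsub.
move=> g [[Pg le_pg] le_qg] _.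
rewrite dsubK //; congr (kcomp G f _).
by apply: ktail_ktail => //; apply/dle_dadd.
Qed.
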